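(* Let $s_0\in(0,1)$, $\tau,\eta,\lambda>0$, and let $(I_j^0)_{j\in\mathbb{Z}}$ be a finitely supported sequence with $I_j^0\in[0,1)$ for all $j$ and $I_j^0>0$ for at least one $j$. Let $f(v):=s_0(1-e^{-\tau v})-\eta v$, $\mathscr{R}_0:=s_0\tau/\eta$, and assume $\mathscr{R}_0>1$. Define $$c_*:=\min_{\gamma>0}\frac{\eta(\mathscr{R}_0-1)+\lambda(e^{-\gamma}-2+e^{\gamma})}{\gamma}>0.$$ Let $(\mathcal{I}_j^\infty)_{j\in\mathbb{Z}}$ be the unique positive bounded solution of $0=f(\mathcal{I}_j)+I_j^0+\lambda(\mathcal{I}_{j-1}-2\mathcal{I}_j+\mathcal{I}_{j+1})$, $j\in\mathbb{Z}$, and let $(\mathcal{I}_j(t))_{j\in\mathbb{Z}}$ solve $$\mathcal{I}_j'(t)=f(\mathcal{I}_j(t))+I_j^0+\lambda\left(\mathcal{I}_{j-1}(t)-2\mathcal{I}_j(t)+\mathcal{I}_{j+1}(t)\right),\quad j\in\mathbb{Z},\ t>0,\qquad \mathcal{I}_j(0)=0\ \ \forall j\in\mathbb{Z}.$$ Then: (i) for every $c\in(0,c_* )$, $\limsup_{t\to+\infty}\sup_{|j|\le ct}|\mathcal{I}_j(t)-\mathcal{I}_j^\infty|=0$; (ii) for every $c>c_*$, $\limsup_{t\to+\infty}\sup_{|j|\ge ct}|\mathcal{I}_j(t)|=0$. *)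

From Stdlib Require Import Reals ZArith.
From Coquelicot Require Import Coquelicot.
Open Scope R_scope.

Definition freac (s0 tau eta v : R) : R := s0 * (1 - exp (- tau * v)) - eta * v.

Definition repr0 (s0 tau eta : R) : R := s0 * tau / eta.

Definition cfun (s0 tau eta lam gamma : R) : R :=
  (eta * (repr0 s0 tau eta - 1) + lam * (exp (- gamma) - 2 + exp gamma)) / gamma.

Definition is_min_pos (g : R -> R) (c : R) : Prop :=
  (exists g0, 0 < g0 /\ g g0 = c) /\ (forall gam, 0 < gam -> c <= g gam).

Definition dlap (u : Z -> R) (j : Z) : R :=
  u (j - 1)%Z - 2 * u j + u (j + 1)%Z.

From Stdlib Require Import Reals ZArith Lra Lia List.
From Coquelicot Require Import Coquelicot.
Open Scope R_scope.

(* Everything rests on a comparison principle for the lattice equation on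
   [Z x [0, T]]: a maximum principle, with the weight [1 + j^2] taming the
   infinitely many sites.  Comparison with the stationary solution gives
   [0 <= I <= Iinf].  For (ii), [A exp (gam (c t - j))] is a supersolution as
   soon as [c > cfun gam], because [f v <= (s0 tau - eta) v].  For (i),
   [f v >= r v] near [0] for [r] slightly below [s0 tau - eta], so compactly
   supported bumps [eps exp (- gam x) cos (al x)] travelling at any speed below
   [c_*] are subsolutions; launched under a stationary bump lying below
   [I (1)], they keep [I] above a positive constant on [|j| <= c t].  Finally,
   once [I >= del] on a large window, the concavity of [f] brings [I] within
   [eps] of [Iinf] after a fixed time. *)

Lemma exp_monotone x y : x <= y -> exp x <= exp y.
Proof.
  intros [Hlt | ->]; [left; apply exp_increasing; exact Hlt | lra].
Qed.

Lemma exp_opp_mul x : exp x * exp (- x) = 1.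
Proof. rewrite <- exp_plus, Rplus_opp_r; apply exp_0. Qed.

Lemma one_minus_exp_neg_le x : 1 - exp (- x) <= x.
Proof. generalize (exp_ineq1_le (- x)); lra. Qed.

Lemma mul_exp_neg_le_one_minus_exp x : x * exp (- x) <= 1 - exp (- x).
Proof.
  assert (Hpos := exp_pos (- x)).
  assert (exp (- x) * (1 + x) <= exp (- x) * exp x)
    by (apply Rmult_le_compat_l; [lra | apply exp_ineq1_le]).
  generalize (exp_opp_mul x); nra.
Qed.

Lemma one_minus_exp_neg_ge x : 0 <= x -> x * (1 - x) <= 1 - exp (- x).
Proof.
  intros Hx. generalize (mul_exp_neg_le_one_minus_exp x) (exp_ineq1_le (- x)); nra.
Qed.

Lemma nonneg_between_zeros_of_antitone_deriv (phi dphi : R -> R) x :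
  (forall y, is_derive phi y (dphi y)) ->
  (forall y z, 0 <= y -> y <= z -> z <= 1 -> dphi z <= dphi y) ->
  phi 0 = 0 -> phi 1 = 0 -> 0 <= x <= 1 -> 0 <= phi x.
Proof.
  intros Hd Hanti H0 H1 Hx.
  assert (Hc : forall y, continuity_pt phi y).
  { intros y; apply derivable_continuous_pt; exists (dphi y); apply is_derive_Reals, Hd. }
  destruct (Rle_lt_dec 0 (phi x)) as [P | P]; [exact P | exfalso].
  assert (Hx0 : 0 < x) by (destruct (Req_dec x 0) as [-> | ]; lra).
  assert (Hx1 : x < 1) by (destruct (Req_dec x 1) as [-> | ]; lra).
  destruct (MVT_gen phi 0 x dphi) as [c1 [Hc1 E1]]; [intros; apply Hd | intros; apply Hc |].
  destruct (MVT_gen phi x 1 dphi) as [c2 [Hc2 E2]]; [intros; apply Hd | intros; apply Hc |].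
  rewrite Rmin_left, Rmax_right in Hc1, Hc2 by lra.
  assert (dphi c2 <= dphi c1) by (apply Hanti; lra).
  assert (dphi c1 < 0) by (destruct (Rle_lt_dec 0 (dphi c1)); [nra | lra]).
  assert (0 < dphi c2) by (destruct (Rle_lt_dec (dphi c2) 0); [nra | lra]).
  lra.
Qed.

(* Strong concavity of [x |-> 1 - exp (- a x)] on [0, 1], whose second
   derivative is at most [- a^2 exp (- a)] there. *)
Lemma exp_concavity_gap a th : 0 < a -> 0 <= th <= 1 ->
  a * a * exp (- a) / 2 * th * (1 - th) <= 1 - exp (- (a * th)) - th * (1 - exp (- a)).
Proof.
  intros Ha Hth.
  set (k := a * a * exp (- a) / 2).
  set (dphi := fun x => a * exp (- (a * x)) - (1 - exp (- a)) - k * (1 - 2 * x)).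
  cut (0 <= 1 - exp (- (a * th)) - th * (1 - exp (- a)) - k * th * (1 - th)); [lra |].
  apply (nonneg_between_zeros_of_antitone_deriv
           (fun x => 1 - exp (- (a * x)) - x * (1 - exp (- a)) - k * x * (1 - x)) dphi);
    [| | rewrite Rmult_0_r, Ropp_0, exp_0; ring | rewrite Rmult_1_r; ring | exact Hth].
  - intros y; unfold dphi; auto_derive; [exact I | ring].
  - intros x y Hx Hxy Hy; unfold dphi, k.
    assert (Ey : exp (- (a * y)) = exp (- (a * x)) * exp (- (a * (y - x))))
      by (rewrite <- exp_plus; f_equal; ring).
    assert (Hpos := exp_pos (- (a * x))).
    assert (Hgap : exp (- (a * x)) * (a * (y - x) * exp (- (a * (y - x))))
                   <= exp (- (a * x)) * (1 - exp (- (a * (y - x)))))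
      by (apply Rmult_le_compat_l; [lra | apply mul_exp_neg_le_one_minus_exp]).
    assert (Hay : exp (- a) <= exp (- (a * y))) by (apply exp_monotone; nra).
    assert (a * (y - x) * exp (- a) <= a * (y - x) * exp (- (a * y)))
      by (apply Rmult_le_compat_l; nra).
    assert (a * (y - x) * exp (- (a * y)) <= exp (- (a * x)) - exp (- (a * y)))
      by (rewrite Ey; nra).
    assert (a * (a * (y - x) * exp (- a)) <= a * (exp (- (a * x)) - exp (- (a * y))))
      by (apply Rmult_le_compat_l; lra).
    lra.
Qed.

Section Nonlinearity.

Variables s0 tau eta : R.
Hypotheses (Hs0 : 0 < s0) (Htau : 0 < tau) (Heta : 0 < eta).

Lemma freac_0 : freac s0 tau eta 0 = 0.
Proof. unfold freac; rewrite Rmult_0_r, exp_0; ring. Qed.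

Lemma freac_sub_le M a b : 0 <= M -> - M <= a <= b ->
  freac s0 tau eta b - freac s0 tau eta a <= s0 * tau * exp (tau * M) * (b - a).
Proof.
  intros HM [Ha Hab]; unfold freac.
  assert (E : exp (- tau * b) = exp (- tau * a) * exp (- (tau * (b - a))))
    by (rewrite <- exp_plus; f_equal; ring).
  assert (Hea : exp (- tau * a) <= exp (tau * M)) by (apply exp_monotone; nra).
  assert (Hd : 0 <= 1 - exp (- (tau * (b - a)))).
  { rewrite <- exp_0 at 1; assert (exp (- (tau * (b - a))) <= exp 0) by (apply exp_monotone; nra); lra. }
  assert (exp (- tau * a) * (1 - exp (- (tau * (b - a)))) <= exp (tau * M) * (tau * (b - a)))
    by (apply Rmult_le_compat; [left; apply exp_pos | exact Hd | exact Hea |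
                                apply one_minus_exp_neg_le]).
  rewrite E; nra.
Qed.

Lemma freac_sub_le_nonneg a b : 0 <= a <= b ->
  freac s0 tau eta b - freac s0 tau eta a <= s0 * tau * (b - a).
Proof.
  intros Hab; rewrite <- (Rmult_1_r (s0 * tau)), <- exp_0, <- (Rmult_0_r tau).
  apply freac_sub_le; lra.
Qed.

Lemma freac_le_linear v : 0 <= v -> freac s0 tau eta v <= (s0 * tau - eta) * v.
Proof.
  intros Hv; unfold freac; generalize (one_minus_exp_neg_le (tau * v)).
  replace (- tau * v) with (- (tau * v)) by ring; nra.
Qed.

Lemma freac_ge_neg v : 0 <= v -> - eta * v <= freac s0 tau eta v.
Proof.
  intros Hv; unfold freac.
  assert (exp (- tau * v) <= exp 0) by (apply exp_monotone; nra).
  rewrite exp_0 in *; nra.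
Qed.

Lemma freac_ge_linear_near_0 r : r < s0 * tau - eta ->
  exists nu, 0 < nu /\ forall v, 0 <= v <= nu -> r * v <= freac s0 tau eta v.
Proof.
  intros Hr.
  exists ((s0 * tau - eta - r) / (s0 * tau * tau)); split.
  { apply Rdiv_lt_0_compat; [lra | repeat apply Rmult_lt_0_compat; lra]. }
  intros v Hv.
  assert (Hq := one_minus_exp_neg_ge (tau * v) ltac:(nra)).
  assert (s0 * tau * tau * v <= s0 * tau - eta - r).
  { destruct Hv as [_ Hv].
    apply Rmult_le_compat_l with (r := s0 * tau * tau) in Hv; [| repeat apply Rmult_le_pos; lra].
    replace (s0 * tau * tau * ((s0 * tau - eta - r) / (s0 * tau * tau)))
      with (s0 * tau - eta - r) in Hv by (field; lra).
    exact Hv. }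
  unfold freac; replace (- tau * v) with (- (tau * v)) by ring; nra.
Qed.

Lemma freac_concavity_gap V th : 0 < V -> 0 <= th <= 1 ->
  s0 * tau * tau * V * exp (- (tau * V)) / 2 * V * th * (1 - th)
  <= freac s0 tau eta (th * V) - th * freac s0 tau eta V.
Proof.
  intros HV Hth.
  assert (G := exp_concavity_gap (tau * V) th ltac:(nra) Hth).
  apply Rmult_le_compat_l with (r := s0) in G; [| lra].
  unfold freac.
  replace (- tau * (th * V)) with (- (tau * V * th)) by ring.
  replace (- tau * V) with (- (tau * V)) by ring.
  nra.
Qed.

End Nonlinearity.
Definition continuous_nonneg_at (g : R -> R) (t : R) : Prop :=
  forall eps, 0 < eps -> exists d, 0 < d /\
    forall u, 0 <= u -> Rabs (u - t) < d -> Rabs (g u - g t) < eps.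

Lemma continuity_pt_continuous_nonneg_at g t : continuity_pt g t -> continuous_nonneg_at g t.
Proof.
  rewrite continuity_pt_locally; intros Hg eps Heps.
  destruct (Hg (mkposreal eps Heps)) as [d Hd].
  exists d; split; [apply cond_pos | intros u _ Hu; apply Hd, Hu].
Qed.

Lemma continuous_nonneg_at_minus g1 g2 t :
  continuous_nonneg_at g1 t -> continuous_nonneg_at g2 t ->
  continuous_nonneg_at (fun u => g1 u - g2 u) t.
Proof.
  intros H1 H2 eps Heps.
  destruct (H1 (eps / 2) ltac:(lra)) as [d1 [Hd1 H1']].
  destruct (H2 (eps / 2) ltac:(lra)) as [d2 [Hd2 H2']].
  exists (Rmin d1 d2); split; [apply Rmin_pos; assumption |].
  intros u Hu Hut.
  specialize (H1' u Hu ltac:(generalize (Rmin_l d1 d2); lra)).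
  specialize (H2' u Hu ltac:(generalize (Rmin_r d1 d2); lra)).
  replace (g1 u - g2 u - (g1 t - g2 t)) with ((g1 u - g1 t) - (g2 u - g2 t)) by ring.
  eapply Rle_lt_trans; [apply Rabs_triang |]; rewrite Rabs_Ropp; lra.
Qed.

Definition clamp (T u : R) : R := Rmin T (Rmax 0 u).

Lemma clamp_in T u : 0 <= T -> 0 <= clamp T u <= T.
Proof. intros; unfold clamp, Rmin, Rmax; repeat destruct Rle_dec; lra. Qed.

Lemma clamp_id T u : 0 <= u <= T -> clamp T u = u.
Proof. intros; unfold clamp, Rmin, Rmax; repeat destruct Rle_dec; lra. Qed.

Lemma clamp_lipschitz T u v : 0 <= T -> Rabs (clamp T u - clamp T v) <= Rabs (u - v).
Proof.
  intros; unfold clamp, Rmin, Rmax; repeat destruct Rle_dec;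
    unfold Rabs; repeat destruct Rcase_abs; lra.
Qed.

Lemma continuity_pt_clamp g T c : 0 <= T ->
  (forall t, 0 <= t <= T -> continuous_nonneg_at g t) ->
  continuity_pt (fun u => g (clamp T u)) c.
Proof.
  intros HT Hg; apply continuity_pt_locally; intros eps.
  destruct (Hg (clamp T c) (clamp_in T c HT) eps (cond_pos eps)) as [d [Hd Hu]].
  exists (mkposreal d Hd); intros u Hu'.
  apply Hu; [apply clamp_in, HT |].
  eapply Rle_lt_trans; [apply clamp_lipschitz, HT | exact Hu'].
Qed.

Lemma continuous_max_on_list (h : Z -> R -> R) T (l : list Z) :
  0 <= T -> l <> nil -> (forall j t, continuity_pt (h j) t) ->
  exists j0 t0, 0 <= t0 <= T /\
    forall j t, In j l -> 0 <= t <= T -> h j t <= h j0 t0.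
Proof.
  intros HT Hl Hc; induction l as [| a l IH]; [congruence |].
  destruct (continuity_ab_maj (h a) 0 T HT (fun c _ => Hc a c)) as [ta [Hta Hta']].
  destruct l as [| b l'].
  - exists a, ta; split; [exact Hta' |].
    intros j t [<- | []] Ht; apply Hta, Ht.
  - destruct IH as [j1 [t1 [Ht1 Hm]]]; [congruence |].
    destruct (Rle_dec (h a ta) (h j1 t1)).
    + exists j1, t1; split; [exact Ht1 |].
      intros j t [<- | Hj] Ht; [specialize (Hta t Ht); lra | apply Hm; assumption].
    + exists a, ta; split; [exact Hta' |].
      intros j t [<- | Hj] Ht; [apply Hta, Ht | specialize (Hm j t Hj Ht); lra].
Qed.

Definition window (N : nat) : list Z :=
  map (fun n => (Z.of_nat n - Z.of_nat N)%Z) (seq 0 (2 * N + 1)).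

Lemma in_window N j : (Z.abs j <= Z.of_nat N)%Z -> In j (window N).
Proof.
  intros H; apply in_map_iff; exists (Z.to_nat (j + Z.of_nat N)).
  split; [lia | apply in_seq; lia].
Qed.

Lemma window_nonempty N : window N <> nil.
Proof.
  unfold window; replace (2 * N + 1)%nat with (S (2 * N)) by lia; simpl; congruence.
Qed.

Lemma deriv_nonneg_at_left_max g t0 d del : is_derive g t0 d -> 0 < del ->
  (forall u, t0 - del <= u <= t0 -> g u <= g t0) -> 0 <= d.
Proof.
  intros Hd Hdel Hm; apply is_derive_Reals in Hd.
  destruct (Rle_lt_dec 0 d) as [P | P]; [exact P | exfalso].
  destruct (Hd (- d) ltac:(lra)) as [e He].
  set (h := - Rmin (e / 2) del).
  assert (Hmin : 0 < Rmin (e / 2) del) by (apply Rmin_pos; generalize (cond_pos e); lra).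
  assert (Hh : Rabs h < e).
  { unfold h; rewrite Rabs_Ropp, Rabs_right by lra.
    generalize (Rmin_l (e / 2) del) (cond_pos e); lra. }
  specialize (He h ltac:(unfold h; lra) Hh).
  assert (g (t0 + h) <= g t0) by (apply Hm; generalize (Rmin_r (e / 2) del); unfold h; lra).
  set (q := (g (t0 + h) - g t0) / h) in *.
  assert (q * h = g (t0 + h) - g t0) by (unfold q; field; unfold h; lra).
  assert (0 <= q) by (unfold h in *; nra).
  apply Rabs_def2 in He; lra.
Qed.

Section ComparisonPrinciple.

Variables (z : Z -> R -> R) (T L lam : R).
Hypotheses (HT : 0 <= T) (HL : 0 <= L) (Hlam : 0 < lam).
Hypothesis z_cont : forall j t, 0 <= t <= T -> continuous_nonneg_at (z j) t.
Hypothesis z_bounded : exists B, forall j t, 0 <= t <= T -> z j t <= B.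
Hypothesis z_init : forall j, z j 0 <= 0.
Hypothesis z_subsolution : forall j t, 0 < t <= T -> 0 < z j t ->
  exists d, is_derive (z j) t d /\ d <= L * z j t + lam * dlap (fun k => z k t) j.

(* The weight [rho] confines the maximum to a finite window of sites, and
   [exp (- K t)] with [K > L + 2 lam] makes a positive maximum impossible. *)
Let K := L + 2 * lam + 1.
Let rho (j : Z) := 1 + IZR j * IZR j.
Let weighted eps j t := z j (clamp T t) * exp (- K * clamp T t) - eps * rho j.

Let rho_ge_1 j : 1 <= rho j.
Proof. unfold rho; nra. Qed.

Let weighted_eq eps j t : 0 <= t <= T ->
  weighted eps j t = z j t * exp (- K * t) - eps * rho j.
Proof. intros Ht; unfold weighted; rewrite clamp_id by exact Ht; reflexivity. Qed.

Lemma weighted_max_exists eps j1 t1 : 0 < eps -> 0 <= t1 <= T -> 0 < weighted eps j1 t1 ->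
  exists j0 t0, 0 <= t0 <= T /\
    forall j t, 0 <= t <= T -> weighted eps j t <= weighted eps j0 t0.
Proof.
  intros Heps Ht1 Hpos1.
  destruct z_bounded as [B0 HB0]; set (B := Rmax B0 0).
  assert (Hle : forall j t, 0 <= t <= T -> weighted eps j t <= B - eps * rho j).
  { intros j t Ht; rewrite weighted_eq by exact Ht.
    assert (exp (- K * t) <= exp 0) by (apply exp_monotone; unfold K; nra).
    rewrite exp_0 in *; generalize (exp_pos (- K * t)) (HB0 j t Ht) (Rmax_l B0 0) (Rmax_r B0 0).
    fold B; destruct (Rle_dec 0 (z j t)); nra. }
  destruct (archimed (B / eps)) as [Har _].
  set (N := Z.to_nat (up (B / eps))).
  assert (Hfar : forall j t, (Z.of_nat N < Z.abs j)%Z -> 0 <= t <= T -> weighted eps j t < 0).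
  { intros j t Hj Ht; eapply Rle_lt_trans; [apply Hle, Ht |].
    assert (IZR (up (B / eps)) <= IZR (Z.abs j)) by (apply IZR_le; unfold N in Hj; lia).
    assert (IZR (Z.abs j) <= IZR j * IZR j) by (rewrite <- mult_IZR; apply IZR_le; nia).
    assert (B / eps * eps = B) by (field; lra).
    unfold rho; nra. }
  assert (Hcont : forall j t, continuity_pt (weighted eps j) t).
  { intros j t; apply continuity_pt_minus; [| apply continuity_pt_const; intros ? ?; reflexivity].
    apply continuity_pt_mult; [apply continuity_pt_clamp; auto |].
    apply (continuity_pt_clamp (fun u => exp (- K * u))); [exact HT |].
    intros u _; apply continuity_pt_continuous_nonneg_at.
    apply derivable_continuous_pt; eexists; apply is_derive_Reals; auto_derive; auto. }
  destruct (continuous_max_on_list (weighted eps) T (window N) HT (window_nonempty N) Hcont)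
    as [j0 [t0 [Ht0 Hmax]]].
  assert (Hwin : forall j t, 0 <= t <= T -> weighted eps j t <= weighted eps j0 t0 \/
                 weighted eps j t < 0).
  { intros j t Ht; destruct (Z_le_gt_dec (Z.abs j) (Z.of_nat N)).
    - left; apply Hmax; [apply in_window |]; assumption.
    - right; apply Hfar; [lia | exact Ht]. }
  exists j0, t0; split; [exact Ht0 |].
  intros j t Ht; destruct (Hwin j t Ht), (Hwin j1 t1 Ht1); lra.
Qed.

Lemma weighted_max_nonpos eps j0 t0 : 0 < eps -> 0 <= t0 <= T ->
  (forall j t, 0 <= t <= T -> weighted eps j t <= weighted eps j0 t0) ->
  weighted eps j0 t0 <= 0.
Proof.
  intros Heps Ht0 Hmax; destruct (Rle_lt_dec (weighted eps j0 t0) 0) as [P | Hpos];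
    [exact P | exfalso].
  set (e0 := exp (- K * t0)); assert (He0 : 0 < e0) by apply exp_pos.
  assert (Hw : forall j, weighted eps j t0 = z j t0 * e0 - eps * rho j)
    by (intros j; apply weighted_eq, Ht0).
  assert (Hz0 : eps < z j0 t0 * e0)
    by (rewrite Hw in Hpos; generalize (rho_ge_1 j0); nra).
  assert (Hzpos : 0 < z j0 t0) by nra.
  assert (Ht0pos : 0 < t0)
    by (destruct (Req_dec t0 0) as [E | ]; [rewrite E in Hzpos; generalize (z_init j0); lra | lra]).
  destruct (z_subsolution j0 t0 ltac:(lra) Hzpos) as [d [Hder Hdle]].
  assert (Hdiff : is_derive (fun u => z j0 u * exp (- K * u)) t0 (d * e0 + z j0 t0 * (- K * e0))).
  { apply (Derive.is_derive_mult (z j0) (fun u => exp (- K * u))); [exact Hder |].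
    unfold e0; auto_derive; [exact I | ring]. }
  assert (Hgrow : 0 <= d * e0 + z j0 t0 * (- K * e0)).
  { apply (deriv_nonneg_at_left_max _ t0 _ t0 Hdiff Ht0pos); intros u Hu.
    specialize (Hmax j0 u ltac:(lra)); rewrite !weighted_eq in Hmax by lra; lra. }
  assert (Hrho : rho (j0 + 1)%Z + rho (j0 - 1)%Z - 2 * rho j0 = 2)
    by (unfold rho; rewrite plus_IZR, minus_IZR; ring).
  assert (Hp := Hmax (j0 + 1)%Z t0 Ht0); assert (Hm := Hmax (j0 - 1)%Z t0 Ht0).
  rewrite !Hw in Hp, Hm.
  assert (Hlap : e0 * dlap (fun k => z k t0) j0 <= 2 * eps) by (unfold dlap; nra).
  assert (e0 * d <= e0 * (L * z j0 t0 + lam * dlap (fun k => z k t0) j0))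
    by (apply Rmult_le_compat_l; lra).
  unfold K in Hgrow; nra.
Qed.

Theorem comparison_principle j t : 0 <= t <= T -> z j t <= 0.
Proof.
  intros Ht; destruct (Rle_lt_dec (z j t) 0) as [P | Hpos]; [exact P | exfalso].
  set (eps := z j t * exp (- K * t) / (2 * rho j)).
  assert (Hrho := rho_ge_1 j); assert (He := exp_pos (- K * t)).
  assert (Heps : 0 < eps) by (apply Rdiv_lt_0_compat; nra).
  assert (Hw : 0 < weighted eps j t).
  { rewrite weighted_eq by exact Ht.
    assert (eps * rho j = z j t * exp (- K * t) / 2) by (unfold eps; field; lra).
    nra. }
  destruct (weighted_max_exists eps j t Heps Ht Hw) as [j0 [t0 [Ht0 Hmax]]].
  generalize (weighted_max_nonpos eps j0 t0 Heps Ht0 Hmax) (Hmax j t Ht); lra.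
Qed.

End ComparisonPrinciple.

Definition lattice_field (s0 tau eta lam : R) (I0 u : Z -> R) (j : Z) : R :=
  freac s0 tau eta (u j) + I0 j + lam * dlap u j.

Record lattice_solution (s0 tau eta lam : R) (I0 : Z -> R) (I : Z -> R -> R) : Prop := {
  solution_deriv : forall j t, 0 < t ->
    is_derive (I j) t (lattice_field s0 tau eta lam I0 (fun k => I k t) j);
  solution_init : forall j, I j 0 = 0;
  solution_cont0 : forall j, filterlim (I j) (at_right 0) (locally 0);
  solution_bounded : forall T, exists M, forall j t, 0 <= t <= T -> Rabs (I j t) <= M }.

Lemma dlap_reflect (u : Z -> R) j : dlap (fun k => u (- k)%Z) j = dlap u (- j)%Z.
Proof.
  unfold dlap; replace (- (j - 1))%Z with (- j + 1)%Z by lia.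
  replace (- (j + 1))%Z with (- j - 1)%Z by lia; ring.
Qed.

Lemma lattice_solution_reflect s0 tau eta lam I0 I :
  lattice_solution s0 tau eta lam I0 I ->
  lattice_solution s0 tau eta lam (fun j => I0 (- j)%Z) (fun j t => I (- j)%Z t).
Proof.
  intros [Hd Hi Hc Hb]; split; intros; [| apply Hi | apply Hc |].
  - unfold lattice_field; rewrite (dlap_reflect (fun k => I k t)); apply Hd; assumption.
  - destruct (Hb T) as [M HM]; exists M; intros; apply HM; assumption.
Qed.

Lemma dlap_minus (u v : Z -> R) j : dlap (fun k => u k - v k) j = dlap u j - dlap v j.
Proof. unfold dlap; ring. Qed.

Section Solution.

Variables (s0 tau eta lam : R) (I0 : Z -> R) (I : Z -> R -> R).
Hypotheses (Hs0 : 0 < s0) (Htau : 0 < tau) (Heta : 0 < eta) (Hlam : 0 < lam).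
Hypothesis HI : lattice_solution s0 tau eta lam I0 I.
Hypothesis HI0 : forall j, 0 <= I0 j.

Local Notation field := (lattice_field s0 tau eta lam I0).

Lemma solution_continuous j t : 0 <= t -> continuous_nonneg_at (I j) t.
Proof.
  intros [Ht | <-].
  - apply continuity_pt_continuous_nonneg_at, derivable_continuous_pt.
    eexists; apply is_derive_Reals, (solution_deriv _ _ _ _ _ _ HI), Ht.
  - intros eps Heps.
    assert (Hc := solution_cont0 _ _ _ _ _ _ HI j); rewrite filterlim_locally in Hc.
    destruct (Hc (mkposreal eps Heps)) as [d Hd].
    exists d; split; [apply cond_pos |]; intros u [Hu | <-] Hud.
    + rewrite (solution_init _ _ _ _ _ _ HI); apply (Hd u Hud Hu).
    + rewrite Rminus_eq_0, Rabs_R0; exact Heps.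
Qed.

Lemma solution_shift_deriv s k u : 0 < s -> 0 <= u ->
  is_derive (fun v => I k (s + v)) u (field (fun k => I k (s + u)) k).
Proof.
  intros Hs Hu.
  assert (Hshift : is_derive (fun v => s + v) u 1) by (auto_derive; auto).
  assert (H := is_derive_comp (I k) (fun v => s + v) u _ 1
                 (solution_deriv _ _ _ _ _ _ HI k (s + u) ltac:(lra)) Hshift).
  rewrite <- (scal_one (field (fun k => I k (s + u)) k)); exact H.
Qed.

Lemma solution_nonneg j t : 0 <= t -> 0 <= I j t.
Proof.
  intros Ht.
  destruct (solution_bounded _ _ _ _ _ _ HI t) as [M0 HM0]; set (M := Rmax M0 0).
  assert (HM : forall k u, 0 <= u <= t -> - M <= I k u <= M).
  { intros k u Hu; apply Rabs_le_between; eapply Rle_trans; [apply HM0, Hu | apply Rmax_l]. }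
  assert (HM' : 0 <= M) by apply Rmax_r.
  assert (HL : 0 < s0 * tau * exp (tau * M))
    by (generalize (exp_pos (tau * M)); intros; apply Rmult_lt_0_compat; nra).
  cut (0 - I j t <= 0); [lra |].
  apply (comparison_principle (fun k u => 0 - I k u) t (s0 * tau * exp (tau * M)) lam);
    [lra | lra | exact Hlam | | | | | lra].
  - intros k u Hu; apply continuous_nonneg_at_minus; [| apply solution_continuous; lra].
    apply continuity_pt_continuous_nonneg_at, continuity_pt_const; intros ? ?; reflexivity.
  - exists M; intros k u Hu; specialize (HM k u Hu); lra.
  - intros k; rewrite (solution_init _ _ _ _ _ _ HI); lra.
  - intros k u Hu Hz; eexists; split.
    + apply (is_derive_minus (fun _ => 0)); [apply is_derive_const |].
      apply (solution_deriv _ _ _ _ _ _ HI); lra.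
    + rewrite (dlap_minus (fun _ => 0) (fun k => I k u)); unfold lattice_field.
      assert (Hf := freac_sub_le s0 tau eta Hs0 Htau Heta M (I k u) 0 HM'
                      ltac:(specialize (HM k u ltac:(lra)); lra)).
      rewrite freac_0 in Hf; generalize (HI0 k); unfold dlap, minus, plus, opp, zero in *; simpl.
      intros; lra.
Qed.

Lemma solution_le_supersolution (W : Z -> R -> R) :
  (forall k t, 0 <= t -> 0 <= W k t) ->
  (forall k t, continuity_pt (W k) t) ->
  (forall k t, 0 < t -> exists d, is_derive (W k) t d /\ field (fun k => W k t) k <= d) ->
  forall j t, 0 <= t -> I j t <= W j t.
Proof.
  intros HW Hc Hsuper j t Ht.
  destruct (solution_bounded _ _ _ _ _ _ HI t) as [M HM].
  cut (I j t - W j t <= 0); [lra |].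
  apply (comparison_principle (fun k u => I k u - W k u) t (s0 * tau) lam);
    [lra | nra | exact Hlam | | | | | lra].
  - intros k u Hu; apply continuous_nonneg_at_minus; [apply solution_continuous; lra |].
    apply continuity_pt_continuous_nonneg_at, Hc.
  - exists M; intros k u Hu; specialize (HM k u Hu); specialize (HW k u ltac:(lra)).
    apply Rabs_le_between in HM; lra.
  - intros k; rewrite (solution_init _ _ _ _ _ _ HI); specialize (HW k 0 ltac:(lra)); lra.
  - intros k u Hu Hz; destruct (Hsuper k u ltac:(lra)) as [d [Hd Hfd]].
    eexists; split.
    + apply (is_derive_minus (I k) (W k)); [apply (solution_deriv _ _ _ _ _ _ HI); lra | exact Hd].
    + rewrite (dlap_minus (fun k => I k u) (fun k => W k u)); unfold lattice_field in *.
      assert (Hf := freac_sub_le_nonneg s0 tau eta Hs0 Htau Heta (W k u) (I k u)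
                      ltac:(specialize (HW k u ltac:(lra)); lra)).
      unfold minus, plus, opp; simpl; lra.
Qed.

Lemma solution_ge_subsolution s (w : Z -> R -> R) : 0 < s ->
  (forall k u, continuity_pt (w k) u) ->
  (exists B, forall k u, 0 <= u -> w k u <= B) ->
  (forall k, w k 0 <= I k s) ->
  (forall k u, 0 < u -> 0 < w k u ->
     exists d, is_derive (w k) u d /\ d <= field (fun k => w k u) k) ->
  forall k u, 0 <= u -> w k u <= I k (s + u).
Proof.
  intros Hs Hc [B HB] Hinit Hsub k u Hu.
  cut (w k u - I k (s + u) <= 0); [lra |].
  apply (comparison_principle (fun k v => w k v - I k (s + v)) u (s0 * tau) lam);
    [lra | nra | exact Hlam | | | | | lra].
  - intros j v Hv; apply continuous_nonneg_at_minus; apply continuity_pt_continuous_nonneg_at;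
      [apply Hc |].
    apply derivable_continuous_pt; eexists; apply is_derive_Reals, solution_shift_deriv; lra.
  - exists B; intros j v Hv; generalize (HB j v ltac:(lra)) (solution_nonneg j (s + v) ltac:(lra)).
    lra.
  - intros j; rewrite Rplus_0_r; generalize (Hinit j); lra.
  - intros j v Hv Hz.
    assert (HIv := solution_nonneg j (s + v) ltac:(lra)).
    destruct (Hsub j v ltac:(lra) ltac:(lra)) as [d [Hd Hdf]].
    eexists; split.
    + apply (is_derive_minus (w j) (fun v => I j (s + v))); [exact Hd |].
      apply solution_shift_deriv; lra.
    + rewrite (dlap_minus (fun k => w k v) (fun k => I k (s + v))); unfold lattice_field in *.
      assert (Hf := freac_sub_le_nonneg s0 tau eta Hs0 Htau Heta (I j (s + v)) (w j v)
                      ltac:(lra)).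
      unfold minus, plus, opp; simpl; lra.
Qed.

Lemma solution_le_stationary (V : Z -> R) :
  (forall j, 0 < V j) -> (forall j, field V j = 0) ->
  forall j t, 0 <= t -> I j t <= V j.
Proof.
  intros HV HVeq; apply (solution_le_supersolution (fun k _ => V k)).
  - intros k _ _; apply Rlt_le, HV.
  - intros k t; apply continuity_pt_const; intros ? ?; reflexivity.
  - intros k t _; exists 0; split; [apply (is_derive_const (V k) t) | rewrite HVeq; lra].
Qed.

(* Positivity spreads one site at a time: [exp ((eta + 2 lam) t) I_j] is
   strictly increasing as soon as the source or a neighbour is positive. *)
Lemma solution_pos_of_neighbours j t : 0 < t ->
  (forall u, 0 < u -> 0 < I0 j + lam * (I (j - 1)%Z u + I (j + 1)%Z u)) ->
  0 < I j t.
Proof.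
  intros Ht Hq.
  set (a := eta + 2 * lam).
  set (dg := fun u => a * exp (a * u) * I j u + exp (a * u) * field (fun k => I k u) j).
  assert (Hd : forall u, 0 < u -> is_derive (fun u => exp (a * u) * I j u) u (dg u)).
  { intros u Hu; apply (Derive.is_derive_mult (fun u => exp (a * u)) (I j));
      [auto_derive; [constructor | ring] | apply (solution_deriv _ _ _ _ _ _ HI), Hu]. }
  assert (Hdpos : forall u, 0 < u -> 0 < dg u).
  { intros u Hu; unfold dg, lattice_field.
    assert (Hf := freac_ge_neg s0 tau eta Hs0 Htau (I j u) (solution_nonneg j u ltac:(lra))).
    assert (He := exp_pos (a * u)); specialize (Hq u Hu).
    assert (0 < a * I j u + freac s0 tau eta (I j u) + I0 j + lam * dlap (fun k => I k u) j)
      by (unfold dlap, a; nra).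
    nra. }
  destruct (MVT_gen (fun u => exp (a * u) * I j u) (t / 2) t dg) as [c [Hc E]].
  { intros x Hx; apply Hd; rewrite Rmin_left in Hx; lra. }
  { intros x Hx; rewrite Rmin_left in Hx by lra; apply derivable_continuous_pt.
    eexists; apply is_derive_Reals, Hd; lra. }
  rewrite Rmin_left, Rmax_right in Hc by lra.
  specialize (Hdpos c ltac:(lra)).
  assert (0 <= exp (a * (t / 2)) * I j (t / 2))
    by (apply Rmult_le_pos; [left; apply exp_pos | apply solution_nonneg; lra]).
  generalize (exp_pos (a * t)); nra.
Qed.

Lemma solution_pos : (exists j, 0 < I0 j) -> forall j t, 0 < t -> 0 < I j t.
Proof.
  intros [jp Hjp].
  assert (Hn : forall n : nat, forall j, Z.abs (j - jp) = Z.of_nat n ->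
                 forall t, 0 < t -> 0 < I j t).
  { induction n as [| n IH]; intros j Hj t Ht;
      apply solution_pos_of_neighbours; [exact Ht | | exact Ht |]; intros u Hu;
      generalize (solution_nonneg (j - 1)%Z u ltac:(lra)) (solution_nonneg (j + 1)%Z u ltac:(lra))
                 (HI0 j); intros.
    - assert (j = jp) by lia; subst j; nra.
    - destruct (Z_le_gt_dec j jp).
      + specialize (IH (j + 1)%Z ltac:(lia) u Hu); nra.
      + specialize (IH (j - 1)%Z ltac:(lia) u Hu); nra. }
  intros j t Ht; apply (Hn (Z.to_nat (Z.abs (j - jp)))); [lia | exact Ht].
Qed.

End Solution.

Lemma exp_decay_eventually_le A a eps : 0 < A -> 0 < a -> 0 < eps ->
  exists T, 0 <= T /\ forall t, T <= t -> A * exp (- (a * t)) <= eps.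
Proof.
  intros HA Ha Heps; exists (Rmax 0 (ln (A / eps) / a)); split; [apply Rmax_l |].
  intros t Ht.
  assert (Hln : ln (A / eps) <= a * t).
  { assert (ln (A / eps) / a <= t) by (eapply Rle_trans; [apply Rmax_r | exact Ht]).
    apply Rmult_le_compat_l with (r := a) in H; [| lra].
    replace (a * (ln (A / eps) / a)) with (ln (A / eps)) in H by (field; lra); exact H. }
  apply exp_monotone in Hln; rewrite exp_ln in Hln by (apply Rdiv_lt_0_compat; assumption).
  assert (Hpos := exp_pos (a * t)).
  rewrite exp_Ropp; apply Rmult_le_reg_r with (exp (a * t)); [exact Hpos |].
  rewrite Rmult_assoc, Rinv_l by lra.
  apply Rmult_le_compat_r with (r := eps) in Hln; [| lra].
  replace (A / eps * eps) with A in Hln by (field; lra); lra.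
Qed.

Lemma dlap_exp g x0 j :
  dlap (fun k => exp (g * (x0 - IZR k))) j = (exp g - 2 + exp (- g)) * exp (g * (x0 - IZR j)).
Proof.
  unfold dlap; rewrite minus_IZR, plus_IZR.
  replace (g * (x0 - (IZR j - 1))) with (g * (x0 - IZR j) + g) by ring.
  replace (g * (x0 - (IZR j + 1))) with (g * (x0 - IZR j) + - g) by ring.
  rewrite !exp_plus; ring.
Qed.

Lemma cfun_pos s0 tau eta lam gam : 0 < eta -> 0 < lam -> 1 < repr0 s0 tau eta -> 0 < gam ->
  0 < cfun s0 tau eta lam gam.
Proof.
  intros Heta Hlam HR Hgam; unfold cfun; apply Rdiv_lt_0_compat; [| exact Hgam].
  generalize (exp_ineq1_le gam) (exp_ineq1_le (- gam)); nra.
Qed.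

Section UpperBound.

Variables (s0 tau eta lam : R) (I0 : Z -> R) (I : Z -> R -> R).
Hypotheses (Hs0 : 0 < s0) (Htau : 0 < tau) (Heta : 0 < eta) (Hlam : 0 < lam).
Hypothesis HI : lattice_solution s0 tau eta lam I0 I.
Variable N : Z.
Hypothesis HI0supp : forall j, (N < Z.abs j)%Z -> I0 j = 0.
Hypothesis HI0range : forall j, 0 <= I0 j < 1.

(* [A exp (gam (c t - j))] is a supersolution: the linearisation
   [f v <= (s0 tau - eta) v] turns the equation into [c = cfun gam], and the
   margin [c - cfun gam] absorbs the compactly supported source. *)
Lemma solution_le_exponential gam c A : 0 < gam -> 0 <= c -> cfun s0 tau eta lam gam < c ->
  exp (gam * IZR (Z.abs N)) <= gam * (c - cfun s0 tau eta lam gam) * A ->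
  forall j t, 0 <= t -> I j t <= A * exp (gam * (c * t - IZR j)).
Proof.
  intros Hgam Hc Hcf HA.
  assert (Hmargin : 0 < gam * (c - cfun s0 tau eta lam gam)) by (apply Rmult_lt_0_compat; lra).
  assert (HApos : 0 < A) by (generalize (exp_pos (gam * IZR (Z.abs N))); nra).
  apply (solution_le_supersolution s0 tau eta lam I0 I Hs0 Htau Heta Hlam HI
           (fun k u => A * exp (gam * (c * u - IZR k)))).
  - intros k u _; generalize (exp_pos (gam * (c * u - IZR k))); nra.
  - intros k u; apply derivable_continuous_pt; eexists; apply is_derive_Reals.
    auto_derive; constructor.
  - intros k u Hu; exists (gam * c * (A * exp (gam * (c * u - IZR k)))); split.
    { auto_derive; [constructor | unfold Rminus; ring]. }
    set (W := A * exp (gam * (c * u - IZR k))).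
    assert (HW : 0 < W) by (unfold W; generalize (exp_pos (gam * (c * u - IZR k))); nra).
    assert (HdW : dlap (fun k => A * exp (gam * (c * u - IZR k))) k
                  = (exp gam - 2 + exp (- gam)) * W).
    { replace (dlap (fun k => A * exp (gam * (c * u - IZR k))) k)
        with (A * dlap (fun k => exp (gam * (c * u - IZR k))) k) by (unfold dlap; ring).
      rewrite dlap_exp; unfold W; ring. }
    assert (Hcf_eq : gam * cfun s0 tau eta lam gam
                     = (s0 * tau - eta) + lam * (exp (- gam) - 2 + exp gam))
      by (unfold cfun, repr0; field; lra).
    assert (Hsource : I0 k <= gam * (c - cfun s0 tau eta lam gam) * W).
    { destruct (Z_lt_ge_dec N (Z.abs k)) as [Hfar | Hnear].
      - rewrite HI0supp by exact Hfar; nra.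
      - assert (exp (gam * IZR (Z.abs N)) * exp (- (gam * IZR (Z.abs N))) = 1) by apply exp_opp_mul.
        assert (exp (- (gam * IZR (Z.abs N))) <= exp (gam * (c * u - IZR k))).
        { apply exp_monotone; assert (IZR k <= IZR (Z.abs N)) by (apply IZR_le; lia).
          assert (0 <= c * u) by nra; nra. }
        assert (exp (gam * IZR (Z.abs N)) * exp (gam * (c * u - IZR k))
                <= gam * (c - cfun s0 tau eta lam gam) * A * exp (gam * (c * u - IZR k)))
          by (apply Rmult_le_compat_r; [left; apply exp_pos | exact HA]).
        generalize (HI0range k) (exp_pos (gam * IZR (Z.abs N))); unfold W; nra. }
    unfold lattice_field; rewrite HdW.
    generalize (freac_le_linear s0 tau eta Hs0 W (Rlt_le _ _ HW)); fold W; nra.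
Qed.

End UpperBound.

Lemma solution_le_exponential_abs s0 tau eta lam I0 I N gam c A :
  0 < s0 -> 0 < tau -> 0 < eta -> 0 < lam -> lattice_solution s0 tau eta lam I0 I ->
  (forall j, (N < Z.abs j)%Z -> I0 j = 0) -> (forall j, 0 <= I0 j < 1) ->
  0 < gam -> 0 <= c -> cfun s0 tau eta lam gam < c ->
  exp (gam * IZR (Z.abs N)) <= gam * (c - cfun s0 tau eta lam gam) * A ->
  forall j t, 0 <= t -> I j t <= A * exp (gam * (c * t - IZR (Z.abs j))).
Proof.
  intros Hs0 Htau Heta Hlam HI Hsupp Hrange Hgam Hc Hcf HA j t Ht.
  destruct (Z_le_gt_dec 0 j).
  - rewrite Z.abs_eq by lia.
    exact (solution_le_exponential s0 tau eta lam I0 I Hs0 Htau Heta Hlam HI N Hsupp Hrange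
             gam c A Hgam Hc Hcf HA j t Ht).
  - rewrite Z.abs_neq by lia; rewrite <- (Z.opp_involutive j) at 1.
    apply (solution_le_exponential s0 tau eta lam (fun j => I0 (- j)%Z) (fun j t => I (- j)%Z t)
             Hs0 Htau Heta Hlam (lattice_solution_reflect _ _ _ _ _ _ HI) N);
      [intros k Hk; apply Hsupp; lia | intros k; apply Hrange | assumption ..].
Qed.

Theorem solution_vanishes_ahead s0 tau eta lam I0 I N cstar :
  0 < s0 -> 0 < tau -> 0 < eta -> 0 < lam -> 1 < repr0 s0 tau eta ->
  lattice_solution s0 tau eta lam I0 I ->
  (forall j, (N < Z.abs j)%Z -> I0 j = 0) -> (forall j, 0 <= I0 j < 1) ->
  (exists gam, 0 < gam /\ cfun s0 tau eta lam gam = cstar) ->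
  forall c, cstar < c -> forall eps, 0 < eps -> exists T, forall t, T <= t ->
    forall j, c * t <= IZR (Z.abs j) -> Rabs (I j t) <= eps.
Proof.
  intros Hs0 Htau Heta Hlam HR HI Hsupp Hrange [gam [Hgam Hcs]] c Hc eps Heps.
  assert (Hcs_pos : 0 < cstar) by (rewrite <- Hcs; apply cfun_pos; assumption).
  set (c2 := (cstar + c) / 2).
  set (A := exp (gam * IZR (Z.abs N)) / (gam * (c2 - cstar))).
  assert (HA : 0 < A)
    by (apply Rdiv_lt_0_compat; [apply exp_pos | apply Rmult_lt_0_compat; unfold c2; lra]).
  destruct (exp_decay_eventually_le A (gam * (c - c2)) eps HA
              ltac:(apply Rmult_lt_0_compat; unfold c2; lra) Heps) as [T [HT HdecayT]].
  exists T; intros t Ht j Hj.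
  assert (Hup := solution_le_exponential_abs s0 tau eta lam I0 I N gam c2 A Hs0 Htau Heta Hlam HI
                   Hsupp Hrange Hgam ltac:(unfold c2; lra) ltac:(rewrite Hcs; unfold c2; lra)
                   ltac:(rewrite Hcs; unfold A; right; field; unfold c2; lra) j t ltac:(lra)).
  assert (Hnonneg := solution_nonneg s0 tau eta lam I0 I Hs0 Htau Heta Hlam HI
                       (fun j => proj1 (Hrange j)) j t ltac:(lra)).
  rewrite Rabs_right by lra.
  eapply Rle_trans; [exact Hup |]; eapply Rle_trans; [| exact (HdecayT t Ht)].
  apply Rmult_le_compat_l; [lra |]; apply exp_monotone.
  assert (0 < gam * (c - c2)) by (apply Rmult_lt_0_compat; unfold c2; lra); nra.
Qed.

Section LocalConvergence.

Variables (s0 tau eta lam : R) (I0 : Z -> R) (I : Z -> R -> R) (V : Z -> R) (del M : R).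
Hypotheses (Hs0 : 0 < s0) (Htau : 0 < tau) (Heta : 0 < eta) (Hlam : 0 < lam).
Hypothesis HI : lattice_solution s0 tau eta lam I0 I.
Hypothesis HI0 : forall j, 0 <= I0 j.
Hypothesis HVeq : forall j, lattice_field s0 tau eta lam I0 V j = 0.
Hypothesis Hdel : 0 < del.
Hypothesis HV : forall j, del <= V j <= M.

(* The subsolution [theta u * V - b exp (K1 u) E] with [theta] increasing from
   [del / M] to [1]: the concavity of [f] pays for the growth of [theta], and
   the fast-growing correction [E] (centred at [j]) keeps it below [I] far
   from [j] at time [0]. *)
Let th0 := del / M.
Let a := s0 * tau * tau * del * exp (- (tau * M)) / 2 * th0.
Let K1 := s0 * tau + lam * (exp 1 + exp (-1) - 2).
Let theta u := 1 - (1 - th0) * exp (- (a * u)).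
Let E j k := exp (IZR k - IZR j) + exp (IZR j - IZR k).
Let lower b j k u := theta u * V k - b * exp (K1 * u) * E j k.

Let del_le_M : del <= M.
Proof. generalize (HV 0%Z); lra. Qed.

Let th0_range : 0 < th0 <= 1.
Proof.
  unfold th0; split; [apply Rdiv_lt_0_compat; generalize del_le_M; lra |].
  apply Rmult_le_reg_r with M; [generalize del_le_M; lra |]; field_simplify; generalize del_le_M; lra.
Qed.

Let th0_V_le k : th0 * V k <= del.
Proof.
  unfold th0; generalize (HV k) del_le_M; intros.
  apply Rmult_le_reg_r with M; [lra |]; field_simplify; [nra | lra].
Qed.

Let a_pos : 0 < a.
Proof.
  unfold a; generalize (exp_pos (- (tau * M))) th0_range; intros.
  apply Rmult_lt_0_compat; [apply Rdiv_lt_0_compat; [repeat apply Rmult_lt_0_compat |] |]; lra.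
Qed.

Let theta_range u : 0 <= u -> th0 <= theta u <= 1.
Proof.
  intros Hu; unfold theta.
  assert (exp (- (a * u)) <= exp 0) by (apply exp_monotone; generalize a_pos; nra).
  rewrite exp_0 in *; generalize (exp_pos (- (a * u))) th0_range; nra.
Qed.

Let E_pos j k : 0 < E j k.
Proof. unfold E; generalize (exp_pos (IZR k - IZR j)) (exp_pos (IZR j - IZR k)); lra. Qed.

Let dlap_E j k : dlap (E j) k = (exp 1 + exp (-1) - 2) * E j k.
Proof.
  unfold dlap, E; rewrite minus_IZR, plus_IZR.
  replace (IZR k - 1 - IZR j) with ((IZR k - IZR j) + -1) by ring.
  replace (IZR j - (IZR k - 1)) with ((IZR j - IZR k) + 1) by ring.
  replace (IZR k + 1 - IZR j) with ((IZR k - IZR j) + 1) by ring.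
  replace (IZR j - (IZR k + 1)) with ((IZR j - IZR k) + -1) by ring.
  rewrite !exp_plus; ring.
Qed.

Let concavity_margin k th : th0 <= th <= 1 ->
  a * (1 - th) * V k <= freac s0 tau eta (th * V k) - th * freac s0 tau eta (V k).
Proof.
  intros Hth; assert (HVk := HV k).
  eapply Rle_trans; [| apply freac_concavity_gap; [exact Hs0 | exact Htau | lra | lra]].
  assert (Hexp : exp (- (tau * M)) <= exp (- (tau * V k))) by (apply exp_monotone; nra).
  assert (del * exp (- (tau * M)) <= V k * exp (- (tau * V k)))
    by (apply Rmult_le_compat; [lra | left; apply exp_pos | lra | exact Hexp]).
  assert (Hk : a <= s0 * tau * tau * V k * exp (- (tau * V k)) / 2 * th).
  { unfold a; apply Rmult_le_compat; [| generalize th0_range; lra | | lra].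
    - generalize (exp_pos (- (tau * M))); intros; apply Rlt_le, Rdiv_lt_0_compat;
        [repeat apply Rmult_lt_0_compat |]; lra.
    - assert (0 < s0 * tau * tau) by (repeat apply Rmult_lt_0_compat; lra).
      apply Rmult_le_compat_r; [lra |].
      replace (s0 * tau * tau * del * exp (- (tau * M))) with (s0 * tau * tau * (del * exp (- (tau * M)))) by ring.
      replace (s0 * tau * tau * V k * exp (- (tau * V k))) with (s0 * tau * tau * (V k * exp (- (tau * V k)))) by ring.
      apply Rmult_le_compat_l; lra. }
  assert (0 <= (1 - th) * V k) by nra.
  apply Rmult_le_compat_r with (r := (1 - th) * V k) in Hk; [| assumption]; nra.
Qed.

Let lower_subsolution b j k u : 0 < b -> 0 < u -> 0 < lower b j k u ->
  exists d, is_derive (lower b j k) u d /\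
    d <= lattice_field s0 tau eta lam I0 (fun k => lower b j k u) k.
Proof.
  intros Hb Hu Hpos.
  exists (a * (1 - theta u) * V k - K1 * (b * exp (K1 * u) * E j k)); split.
  { unfold lower, theta; auto_derive; [constructor | ring]. }
  assert (Hlap : dlap (fun k => lower b j k u) k
                 = theta u * dlap V k - b * exp (K1 * u) * dlap (E j) k)
    by (unfold lower, dlap; ring).
  unfold lattice_field; rewrite Hlap, dlap_E; unfold lower in Hpos |- *; fold K1 in Hpos |- *.
  set (bE := b * exp (K1 * u) * E j k) in *.
  assert (HbE : 0 < bE) by (unfold bE; generalize (exp_pos (K1 * u)) (E_pos j k); intros;
                            repeat apply Rmult_lt_0_compat; assumption).
  assert (Hth := theta_range u ltac:(lra)).
  assert (Hlip := freac_sub_le_nonneg s0 tau eta Hs0 Htau Heta (theta u * V k - bE) (theta u * V k)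
                    ltac:(lra)).
  assert (Hgap := concavity_margin k (theta u) Hth).
  assert (HVk : lam * (theta u * dlap V k) = theta u * (- freac s0 tau eta (V k) - I0 k)).
  { generalize (HVeq k); unfold lattice_field; intros HVk.
    replace (lam * (theta u * dlap V k)) with (theta u * (lam * dlap V k)) by ring.
    f_equal; lra. }
  assert (HI0k : 0 <= (1 - theta u) * I0 k) by (generalize (HI0 k); nra).
  assert (HK1 : K1 * bE = s0 * tau * bE + lam * ((exp 1 + exp (-1) - 2) * bE)) by (unfold K1; ring).
  replace (b * exp (K1 * u) * ((exp 1 + exp (-1) - 2) * E j k))
    with ((exp 1 + exp (-1) - 2) * bE) by (unfold bE; ring).
  lra.
Qed.

Let E_ge_exp_dist j k : exp (IZR (Z.abs (k - j))) <= E j k.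
Proof.
  unfold E; rewrite abs_IZR, minus_IZR; unfold Rabs; destruct Rcase_abs.
  - generalize (exp_pos (IZR k - IZR j)); rewrite Ropp_minus_distr; lra.
  - generalize (exp_pos (IZR j - IZR k)); lra.
Qed.

Let lower_le_initial b j s : 0 < b -> 0 < s ->
  (forall k, IZR (Z.abs (k - j)) <= Rmax 0 (ln (del / b)) -> del <= I k s) ->
  forall k, lower b j k 0 <= I k s.
Proof.
  intros Hb Hs Hwin k; unfold lower, theta; rewrite Rmult_0_r, Ropp_0, exp_0, Rmult_0_r, exp_0.
  assert (Hnear : del <= I k s \/ del <= b * E j k).
  { destruct (Rle_dec (IZR (Z.abs (k - j))) (Rmax 0 (ln (del / b)))) as [P | P];
      [left; apply Hwin, P | right].
    assert (HE : exp (ln (del / b)) <= E j k).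
    { eapply Rle_trans; [| apply E_ge_exp_dist].
      apply exp_monotone; generalize (Rmax_r 0 (ln (del / b))); lra. }
    rewrite exp_ln in HE by (apply Rdiv_lt_0_compat; assumption).
    apply Rmult_le_compat_l with (r := b) in HE; [| lra].
    replace (b * (del / b)) with del in HE by (field; lra); exact HE. }
  generalize (th0_V_le k) (E_pos j k)
             (solution_nonneg s0 tau eta lam I0 I Hs0 Htau Heta Hlam HI HI0 k s ltac:(lra)).
  replace (1 - (1 - th0) * 1) with th0 by ring; intros; destruct Hnear; nra.
Qed.

Theorem solution_near_stationary eps : 0 < eps ->
  exists tau0 R, 0 <= tau0 /\ forall s j, 0 < s ->
    (forall k, IZR (Z.abs (k - j)) <= R -> del <= I k s) -> V j - eps <= I j (s + tau0).
Proof.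
  intros Heps.
  destruct (exp_decay_eventually_le M a (eps / 2) ltac:(generalize del_le_M; lra) a_pos
              ltac:(lra)) as [tau0 [Htau0 Hdecay]].
  set (b := eps / 4 * exp (- (K1 * tau0))).
  assert (Hb : 0 < b) by (apply Rmult_lt_0_compat; [lra | apply exp_pos]).
  exists tau0, (Rmax 0 (ln (del / b))); split; [exact Htau0 |].
  intros s j Hs Hwin.
  assert (Hfinal : lower b j j tau0 <= I j (s + tau0)).
  { apply (solution_ge_subsolution s0 tau eta lam I0 I Hs0 Htau Heta Hlam HI HI0 s (lower b j) Hs);
      [| | apply lower_le_initial; assumption
       | intros k u Hu Hpos; apply lower_subsolution; assumption | exact Htau0].
    - intros k u; apply derivable_continuous_pt; eexists; apply is_derive_Reals.
      unfold lower, theta; auto_derive; constructor.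
    - exists M; intros k u Hu; unfold lower.
      generalize (theta_range u Hu) (HV k) (E_pos j k) (exp_pos (K1 * u)); intros.
      assert (0 <= b * exp (K1 * u) * E j k) by (apply Rmult_le_pos; [apply Rmult_le_pos |]; lra).
      nra. }
  assert (Hb0 : b * exp (K1 * tau0) = eps / 4).
  { unfold b; rewrite Rmult_assoc, <- exp_plus, Rplus_opp_l, exp_0; ring. }
  assert (HEj : E j j = 2) by (unfold E; rewrite Rminus_eq_0, exp_0; ring).
  assert (Hgap : (1 - th0) * exp (- (a * tau0)) * V j <= eps / 2).
  { generalize (Hdecay tau0 (Rle_refl _)) (HV j) th0_range (exp_pos (- (a * tau0))); intros.
    assert ((1 - th0) * V j <= M) by nra; nra. }
  unfold lower, theta in Hfinal; rewrite HEj, Hb0 in Hfinal; lra.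
Qed.

End LocalConvergence.

Lemma cos_ge_1_minus_sq_half a : -2 <= a <= 2 -> 1 - a * a / 2 <= cos a.
Proof.
  intros Ha; destruct (pre_cos_bound a 0 ltac:(lra) ltac:(lra)) as [H _].
  unfold cos_approx, cos_term in H; simpl in H; lra.
Qed.

Lemma sin_ge_cubic a : 0 <= a <= 4 -> a - a * a * a / 6 <= sin a.
Proof.
  intros Ha; destruct (pre_sin_bound a 0 ltac:(lra) ltac:(lra)) as [H _].
  unfold sin_approx, sin_term in H; simpl in H; lra.
Qed.

Lemma sin_le_id a : 0 <= a <= 1 -> sin a <= a.
Proof.
  intros Ha; destruct (pre_sin_bound a 0 ltac:(lra) ltac:(lra)) as [_ H].
  unfold sin_approx, sin_term in H; simpl in H.
  assert (0 <= a * a * a) by (repeat apply Rmult_le_pos; lra).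
  assert (a * a <= 1) by nra.
  assert (a * a * a * a * a / 120 <= a * a * a / 6) by nra.
  lra.
Qed.

Definition bump_radius (al : R) : R := PI / (2 * al).

(* Clamping the argument to [[-2 L, 2 L]], where [L = bump_radius al], keeps
   only the central arch of the cosine, so the bump vanishes for [|x| >= L]. *)
Definition bump (gam al x : R) : R :=
  exp (- (gam * x)) *
  Rmax 0 (cos (al * Rmax (- (2 * bump_radius al)) (Rmin (2 * bump_radius al) x))).

Section Bump.

Variables gam al : R.
Hypothesis Hal : 0 < al.

Lemma bump_radius_pos : 0 < bump_radius al.
Proof. unfold bump_radius; generalize PI_RGT_0; intros; apply Rdiv_lt_0_compat; lra. Qed.

Let al_L : al * bump_radius al = PI / 2.
Proof. unfold bump_radius; field; lra. Qed.

Lemma bump_radius_gt_1 : al <= 1 -> 1 < bump_radius al.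
Proof.
  intros Hal1; generalize PI2_1 al_L; intros; nra.
Qed.

Lemma bump_radius_antitone al0 : 0 < al0 <= al / 2 -> 2 * bump_radius al <= bump_radius al0.
Proof.
  intros Hal0; unfold bump_radius.
  replace (2 * (PI / (2 * al))) with (PI / al) by (field; lra).
  unfold Rdiv; apply Rmult_le_compat_l; [generalize PI_RGT_0; lra |].
  apply Rinv_le_contravar; lra.
Qed.

Lemma bump_continuous x : continuity_pt (bump gam al) x.
Proof.
  unfold bump; apply continuity_pt_mult.
  - apply derivable_continuous_pt; eexists; apply is_derive_Reals; auto_derive; constructor.
  - assert (Hlip : forall f : R -> R, (forall u v, Rabs (f u - f v) <= Rabs (u - v)) ->
                   forall y, continuity_pt f y).
    { intros f Hf y; apply continuity_pt_locally; intros eps; exists eps; intros u Hu.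
      eapply Rle_lt_trans; [apply Hf | exact Hu]. }
    apply (continuity_pt_comp (fun y => cos (al * Rmax (- (2 * bump_radius al))
                                                    (Rmin (2 * bump_radius al) y))) (Rmax 0));
      [apply (continuity_pt_comp (fun y => Rmax (- (2 * bump_radius al)) (Rmin (2 * bump_radius al) y))
                                 (fun y => cos (al * y))) |].
    + apply Hlip; intros u v; unfold Rmin, Rmax; repeat destruct Rle_dec;
        unfold Rabs; repeat destruct Rcase_abs; lra.
    + apply derivable_continuous_pt; eexists; apply is_derive_Reals; auto_derive; constructor.
    + apply Hlip; intros u v; unfold Rmax; repeat destruct Rle_dec;
        unfold Rabs; repeat destruct Rcase_abs; lra.
Qed.

Let bump_unclamped x : Rabs x <= 2 * bump_radius al ->
  bump gam al x = exp (- (gam * x)) * Rmax 0 (cos (al * x)).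
Proof.
  intros Hx; apply Rabs_le_between in Hx; unfold bump.
  replace (Rmax (- (2 * bump_radius al)) (Rmin (2 * bump_radius al) x)) with x
    by (unfold Rmin, Rmax; repeat destruct Rle_dec; lra).
  reflexivity.
Qed.

Lemma bump_inside x : Rabs x < bump_radius al ->
  bump gam al x = exp (- (gam * x)) * cos (al * x) /\ 0 < cos (al * x).
Proof.
  intros Hx; assert (Hc : 0 < cos (al * x)).
  { generalize al_L; intros HaL; apply Rabs_def2 in Hx.
    assert (al * x < al * bump_radius al) by (apply Rmult_lt_compat_l; lra).
    assert (al * - bump_radius al < al * x) by (apply Rmult_lt_compat_l; lra).
    apply cos_gt_0; lra. }
  rewrite bump_unclamped by (generalize (Rabs_pos x); lra).
  rewrite Rmax_right by lra; split; [reflexivity | exact Hc].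
Qed.

Lemma bump_outside x : bump_radius al <= Rabs x -> bump gam al x = 0.
Proof.
  intros Hx; generalize al_L bump_radius_pos; intros HaL HL.
  unfold bump; rewrite Rmax_left; [ring |].
  set (y := Rmax (- (2 * bump_radius al)) (Rmin (2 * bump_radius al) x)).
  assert (Hy : bump_radius al <= Rabs y <= 2 * bump_radius al).
  { unfold y, Rmin, Rmax; repeat destruct Rle_dec; unfold Rabs in *; repeat destruct Rcase_abs; lra. }
  assert (Hay : PI / 2 <= Rabs (al * y) <= PI)
    by (rewrite Rabs_mult, (Rabs_right al) by lra; split; nra).
  unfold Rabs in Hay; destruct Rcase_abs in Hay.
  - rewrite <- cos_neg; apply cos_le_0; lra.
  - apply cos_le_0; lra.
Qed.

Lemma bump_ge_arch x : Rabs x <= 2 * bump_radius al -> exp (- (gam * x)) * cos (al * x) <= bump gam al x.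
Proof.
  intros Hx; rewrite bump_unclamped by exact Hx.
  apply Rmult_le_compat_l; [left; apply exp_pos | apply Rmax_r].
Qed.

Lemma bump_nonneg x : 0 <= bump gam al x.
Proof. unfold bump; apply Rmult_le_pos; [left; apply exp_pos | apply Rmax_l]. Qed.

Lemma bump_le x : 0 <= gam -> bump gam al x <= exp (gam * bump_radius al).
Proof.
  intros Hgam; destruct (Rlt_le_dec (Rabs x) (bump_radius al)) as [P | P].
  - destruct (bump_inside x P) as [-> Hc].
    assert (exp (- (gam * x)) <= exp (gam * bump_radius al)) by (apply exp_monotone; apply Rabs_def2 in P; nra).
    generalize (COS_bound (al * x)) (exp_pos (- (gam * x))); nra.
  - rewrite bump_outside by exact P; left; apply exp_pos.
Qed.

Lemma bump_0 : bump gam al 0 = 1.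
Proof.
  destruct (bump_inside 0) as [-> _]; [rewrite Rabs_R0; exact bump_radius_pos |].
  rewrite !Rmult_0_r, Ropp_0, exp_0, cos_0; ring.
Qed.

End Bump.

(* On the support [|x| < bump_radius al] of [bump gam al] we have
   [|al0 x| <= PI / 4], so the flat bump is at least [1/2] there. *)
Lemma bump_le_flat_bump gam al al0 x : 0 <= gam -> 0 < al <= 1 -> 0 < al0 <= al / 2 ->
  bump gam al x <= 2 * exp (gam * bump_radius al) * bump 0 al0 x.
Proof.
  intros Hgam Hal Hal0; set (L := bump_radius al).
  destruct (Rlt_le_dec (Rabs x) L) as [P | P];
    [| rewrite bump_outside by (lra || exact P);
       generalize (bump_nonneg 0 al0 x) (exp_pos (gam * L)); nra].
  assert (HL0 := bump_radius_antitone al ltac:(lra) al0 Hal0).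
  assert (HL := bump_radius_pos al ltac:(lra)); fold L in HL, HL0.
  destruct (bump_inside 0 al0 ltac:(lra) x ltac:(lra)) as [E _].
  rewrite E, Rmult_0_l, Ropp_0, exp_0, Rmult_1_l.
  assert (Hax : Rabs (al0 * x) <= PI / 4).
  { rewrite Rabs_mult, (Rabs_right al0) by lra.
    assert (al0 * Rabs x <= al / 2 * L) by (apply Rmult_le_compat; [lra | apply Rabs_pos | lra | lra]).
    assert (al * L = PI / 2) by (unfold L, bump_radius; field; lra).
    lra. }
  assert (Hc : 1 / 2 <= cos (al0 * x)).
  { generalize PI_4; intros; apply Rabs_le_between in Hax.
    generalize (cos_ge_1_minus_sq_half (al0 * x) ltac:(lra)); nra. }
  generalize (bump_le gam al ltac:(lra) x Hgam) (exp_pos (gam * L)); fold L; nra.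
Qed.

Lemma bump_is_derive_inside gam al x : 0 < al -> Rabs x < bump_radius al ->
  is_derive (bump gam al) x
    (- (exp (- (gam * x)) * (gam * cos (al * x) + al * sin (al * x)))).
Proof.
  intros Hal Hx.
  apply (is_derive_ext_loc (fun y => exp (- (gam * y)) * cos (al * y)));
    [| auto_derive; [constructor | ring]].
  assert (Hd : 0 < bump_radius al - Rabs x) by lra.
  exists (mkposreal _ Hd); intros y Hy; simpl in Hy.
  unfold ball in Hy; simpl in Hy; unfold AbsRing_ball, abs, minus, plus, opp in Hy; simpl in Hy.
  symmetry; apply (bump_inside gam al Hal).
  replace y with ((y + - x) + x) by ring; eapply Rle_lt_trans; [apply Rabs_triang | lra].
Qed.

Lemma moving_bump_is_derive gam al c eps y u : 0 < al -> Rabs (y - c * u) < bump_radius al ->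
  is_derive (fun u => eps * bump gam al (y - c * u)) u
    (eps * (c * (exp (- (gam * (y - c * u)))
                 * (gam * cos (al * (y - c * u)) + al * sin (al * (y - c * u)))))).
Proof.
  intros Hal Hx.
  assert (Hd := is_derive_comp (bump gam al) (fun u => y - c * u) u _ (- c)
                  (bump_is_derive_inside gam al (y - c * u) Hal Hx)
                  ltac:(auto_derive; [constructor | ring])).
  assert (Hd2 := is_derive_scal _ u eps _ Hd).
  unfold scal in Hd2; simpl in Hd2; unfold mult in Hd2; simpl in Hd2.
  replace (eps * (- c * - (exp (- (gam * (y - c * u)))
                             * (gam * cos (al * (y - c * u)) + al * sin (al * (y - c * u))))))
    with (eps * (c * (exp (- (gam * (y - c * u)))
                      * (gam * cos (al * (y - c * u)) + al * sin (al * (y - c * u))))))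
    in Hd2 by ring.
  exact Hd2.
Qed.

Lemma bump_neighbours_ge gam al x : 0 < al <= 1 -> Rabs x < bump_radius al ->
  exp (- (gam * x)) * ((exp gam + exp (- gam)) * cos al * cos (al * x)
                       + (exp gam - exp (- gam)) * sin al * sin (al * x))
  <= bump gam al (x - 1) + bump gam al (x + 1).
Proof.
  intros Hal Hx; assert (HL := bump_radius_gt_1 al ltac:(lra) ltac:(lra)).
  apply Rabs_def2 in Hx.
  assert (Hm := bump_ge_arch gam al (x - 1) ltac:(apply Rabs_le; lra)).
  assert (Hp := bump_ge_arch gam al (x + 1) ltac:(apply Rabs_le; lra)).
  replace (- (gam * (x - 1))) with (- (gam * x) + gam) in Hm by ring.
  replace (al * (x - 1)) with (al * x - al) in Hm by ring.
  replace (- (gam * (x + 1))) with (- (gam * x) + - gam) in Hp by ring.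
  replace (al * (x + 1)) with (al * x + al) in Hp by ring.
  rewrite exp_plus, cos_minus in Hm; rewrite exp_plus, cos_plus in Hp.
  lra.
Qed.

Lemma positive_min_on_window (u : Z -> R) (N : nat) :
  (forall k, 0 < u k) -> exists m, 0 < m /\ forall k, (Z.abs k <= Z.of_nat N)%Z -> m <= u k.
Proof.
  intros Hpos; induction N as [| N [m [Hm Hmu]]].
  - exists (u 0%Z); split; [apply Hpos |]; intros k Hk; replace k with 0%Z by lia; lra.
  - exists (Rmin m (Rmin (u (Z.of_nat (S N))) (u (- Z.of_nat (S N))%Z))); split;
      [repeat apply Rmin_pos; auto |].
    intros k Hk; destruct (Z_le_gt_dec (Z.abs k) (Z.of_nat N)).
    + eapply Rle_trans; [apply Rmin_l | auto].
    + eapply Rle_trans; [apply Rmin_r |].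
      destruct (Z_le_gt_dec 0 k).
      * replace k with (Z.of_nat (S N)) by lia; apply Rmin_l.
      * replace k with (- Z.of_nat (S N))%Z by lia; apply Rmin_r.
Qed.

(* With these parameters, [bump gam al (j - c t)] is a subsolution of the
   linearisation [u' = r u + lam dlap u]: the [sin] terms cancel exactly and
   the [cos] terms have the right sign. *)
Definition admissible_bump (lam r gam al c : R) : Prop :=
  0 < al <= 1 /\ 0 <= gam /\ 0 <= c /\
  c * al = lam * (exp gam - exp (- gam)) * sin al /\
  c * gam <= r + lam * ((exp gam + exp (- gam)) * cos al - 2).

Section Spreading.

Variables (s0 tau eta lam : R) (I0 : Z -> R) (I : Z -> R -> R).
Hypotheses (Hs0 : 0 < s0) (Htau : 0 < tau) (Heta : 0 < eta) (Hlam : 0 < lam).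
Hypothesis HI : lattice_solution s0 tau eta lam I0 I.
Hypothesis HI0 : forall j, 0 <= I0 j.
Variables r nu : R.
Hypothesis Hr : forall v, 0 <= v <= nu -> r * v <= freac s0 tau eta v.

Lemma bump_subsolution gam al c eps x0 k u :
  admissible_bump lam r gam al c -> 0 < eps -> eps * exp (gam * bump_radius al) <= nu ->
  0 < eps * bump gam al (IZR k - x0 - c * u) ->
  exists d, is_derive (fun u => eps * bump gam al (IZR k - x0 - c * u)) u d /\
    d <= lattice_field s0 tau eta lam I0 (fun k => eps * bump gam al (IZR k - x0 - c * u)) k.
Proof.
  intros [Hal [Hgam [Hc [Hsin Hcos]]]] Heps Hnu Hpos.
  set (x := IZR k - x0 - c * u) in *.
  assert (Hx : Rabs x < bump_radius al).
  { destruct (Rlt_le_dec (Rabs x) (bump_radius al)) as [P | P]; [exact P |].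
    rewrite (bump_outside gam al) in Hpos by lra; lra. }
  destruct (bump_inside gam al ltac:(lra) x Hx) as [Ebx HC].
  set (ex := exp (- (gam * x))) in *; set (C := cos (al * x)) in *; set (S := sin (al * x)).
  exists (eps * (c * (ex * (gam * C + al * S)))); split.
  { apply moving_bump_is_derive; [lra | exact Hx]. }
  assert (Hshift : forall i, IZR (k + i) - x0 - c * u = x + IZR i)
    by (intros i; unfold x; rewrite plus_IZR; ring).
  assert (Hnb := bump_neighbours_ge gam al x Hal Hx).
  assert (Hlap : dlap (fun k => eps * bump gam al (IZR k - x0 - c * u)) k
                 = eps * (bump gam al (x - 1) + bump gam al (x + 1)) - 2 * (eps * bump gam al x)).
  { unfold dlap; rewrite <- (Z.add_opp_r k 1), !Hshift; fold x.
    replace (x + IZR (Z.opp 1)) with (x - 1) by (rewrite opp_IZR; simpl; ring); ring. }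
  assert (Hgrowth : r * (eps * bump gam al x) <= freac s0 tau eta (eps * bump gam al x)).
  { apply Hr; split; [apply Rmult_le_pos; [lra | apply bump_nonneg] |].
    eapply Rle_trans; [| exact Hnu]; apply Rmult_le_compat_l; [lra | apply bump_le; lra]. }
  assert (HexC : 0 < ex * C) by (apply Rmult_lt_0_compat; [apply exp_pos | exact HC]).
  assert (Hcos' : eps * (c * gam * (ex * C))
                  <= eps * ((r + lam * ((exp gam + exp (- gam)) * cos al - 2)) * (ex * C)))
    by (apply Rmult_le_compat_l; [lra | apply Rmult_le_compat_r; lra]).
  assert (Hsin' : eps * (c * al * (ex * S))
                  = eps * (lam * (exp gam - exp (- gam)) * sin al * (ex * S)))
    by (rewrite Hsin; ring).
  assert (Hnb' : lam * eps * (ex * ((exp gam + exp (- gam)) * cos al * C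
                                    + (exp gam - exp (- gam)) * sin al * S))
                 <= lam * eps * (bump gam al (x - 1) + bump gam al (x + 1)))
    by (apply Rmult_le_compat_l; [nra | exact Hnb]).
  unfold lattice_field; rewrite Hlap; cbv beta; fold x; rewrite Ebx in *.
  generalize (HI0 k); intros.
  lra.
Qed.

Lemma solution_above_moving_bump gam al c eps x0 s :
  admissible_bump lam r gam al c -> 0 < eps -> eps * exp (gam * bump_radius al) <= nu -> 0 < s ->
  (forall k, eps * bump gam al (IZR k - x0) <= I k s) ->
  forall k u, 0 <= u -> eps * bump gam al (IZR k - x0 - c * u) <= I k (s + u).
Proof.
  intros Hadm Heps Hnu Hs Hinit.
  assert (Hal : 0 < al) by apply Hadm.
  assert (Hgam : 0 <= gam) by apply Hadm.
  apply (solution_ge_subsolution s0 tau eta lam I0 I Hs0 Htau Heta Hlam HI HI0 s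
           (fun k u => eps * bump gam al (IZR k - x0 - c * u)) Hs).
  - intros k u; apply continuity_pt_mult; [apply continuity_pt_const; intros ? ?; reflexivity |].
    apply (continuity_pt_comp (fun u => IZR k - x0 - c * u) (bump gam al));
      [| apply bump_continuous].
    apply derivable_continuous_pt; eexists; apply is_derive_Reals; auto_derive; constructor.
  - exists (eps * exp (gam * bump_radius al)); intros k u _.
    apply Rmult_le_compat_l; [lra | apply bump_le; assumption].
  - intros k; rewrite Rmult_0_r, Rminus_0_r; apply Hinit.
  - intros k u _ Hpos; apply bump_subsolution; assumption.
Qed.

Lemma flat_bump_admissible al0 : 0 < al0 <= 1 -> lam * (al0 * al0) <= r ->
  admissible_bump lam r 0 al0 0.
Proof.
  intros Hal0 Hsmall; unfold admissible_bump; rewrite Ropp_0, exp_0.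
  assert (Hcos := cos_ge_1_minus_sq_half al0 ltac:(lra)).
  repeat split; try lra; nra.
Qed.

Lemma solution_above_flat_bump al0 : (exists j, 0 < I0 j) -> 0 < nu ->
  0 < al0 <= 1 -> lam * (al0 * al0) <= r ->
  exists eps0, 0 < eps0 <= nu /\
    forall k u, 0 <= u -> eps0 * bump 0 al0 (IZR k) <= I k (1 + u).
Proof.
  intros Hsource Hnu Hal0 Hsmall.
  set (N0 := Z.to_nat (up (bump_radius al0))).
  destruct (positive_min_on_window (fun k => I k 1) N0
              (fun k => solution_pos s0 tau eta lam I0 I Hs0 Htau Heta Hlam HI HI0 Hsource k 1
                          ltac:(lra))) as [m [Hm HmI]].
  exists (Rmin nu m); split; [split; [apply Rmin_pos; assumption | apply Rmin_l] |].
  intros k u Hu.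
  replace (IZR k) with (IZR k - 0 - 0 * u) by ring.
  apply (solution_above_moving_bump 0 al0 0 (Rmin nu m) 0 1); try lra.
  - apply flat_bump_admissible; assumption.
  - apply Rmin_pos; assumption.
  - rewrite Rmult_0_l, exp_0, Rmult_1_r; apply Rmin_l.
  - intros j; rewrite Rminus_0_r.
    destruct (Rlt_le_dec (Rabs (IZR j)) (bump_radius al0)) as [P | P].
    + assert (Hj : (Z.abs j <= Z.of_nat N0)%Z).
      { destruct (archimed (bump_radius al0)) as [Hup _].
        assert (IZR (Z.abs j) < IZR (up (bump_radius al0))) by (rewrite abs_IZR; lra).
        apply lt_IZR in H; unfold N0; lia. }
      assert (Hb := bump_le 0 al0 ltac:(lra) (IZR j) (Rle_refl 0)).
      rewrite Rmult_0_l, exp_0 in Hb.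
      generalize (HmI j Hj) (Rmin_r nu m) (bump_nonneg 0 al0 (IZR j)); cbv beta; nra.
    + rewrite bump_outside by lra; rewrite Rmult_0_r.
      apply (solution_nonneg s0 tau eta lam I0 I Hs0 Htau Heta Hlam HI HI0); lra.
Qed.

(* A flat bump sits below [I] for all times [>= 1]; bumps travelling at
   speed [c > c1] launched under it at any later time give a uniform lower
   bound on [0 <= j <= c1 t]. *)
Lemma solution_ge_behind_front gam al c c1 : (exists j, 0 < I0 j) -> 0 < r -> 0 < nu ->
  admissible_bump lam r gam al c -> 0 < c1 < c ->
  exists del T, 0 < del /\ forall t, T <= t -> forall j, 0 <= IZR j <= c1 * t -> del <= I j t.
Proof.
  intros Hsource Hrpos Hnu Hadm Hc1.
  assert (Hal : 0 < al <= 1) by apply Hadm.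
  assert (Hgam : 0 <= gam) by apply Hadm.
  set (al0 := Rmin (al / 2) (r / lam)).
  assert (Hal0 : 0 < al0 <= al / 2)
    by (split; [apply Rmin_pos; [lra | apply Rdiv_lt_0_compat; lra] | apply Rmin_l]).
  assert (Hsmall : lam * (al0 * al0) <= r).
  { assert (lam * al0 <= r).
    { assert (al0 <= r / lam) by apply Rmin_r.
      apply Rmult_le_compat_l with (r := lam) in H; [| lra].
      replace (lam * (r / lam)) with r in H by (field; lra); exact H. }
    nra. }
  destruct (solution_above_flat_bump al0 Hsource Hnu ltac:(lra) Hsmall) as [eps0 [Heps0 Hflat]].
  set (B := exp (gam * bump_radius al)); assert (HB : 0 < B) by apply exp_pos.
  set (eps1 := eps0 / (2 * B)).
  assert (Heps1 : 0 < eps1) by (apply Rdiv_lt_0_compat; lra).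
  assert (HeB : eps1 * (2 * B) = eps0) by (unfold eps1; field; lra).
  assert (Hmove : forall s, 1 <= s -> forall k u, 0 <= u ->
                    eps1 * bump gam al (IZR k - 0 - c * u) <= I k (s + u)).
  { intros s Hs; apply solution_above_moving_bump; try assumption; [fold B; nra | lra |].
    intros k; rewrite Rminus_0_r.
    assert (Hk := Hflat k (s - 1) ltac:(lra)); replace (1 + (s - 1)) with s in Hk by ring.
    assert (Hdom := bump_le_flat_bump gam al al0 (IZR k) Hgam Hal Hal0); fold B in Hdom.
    apply Rmult_le_compat_l with (r := eps1) in Hdom; [| lra]; nra. }
  exists eps1, (c / (c - c1) + 1); split; [exact Heps1 |].
  intros t Ht j Hj.
  set (u := IZR j / c).
  assert (Hu : 0 <= u) by (apply Rdiv_le_0_compat; lra).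
  assert (Hs : 1 <= t - u).
  { assert (Hcu : c * u = IZR j) by (unfold u; field; lra).
    assert (c / (c - c1) * (c - c1) = c) by (field; lra).
    assert ((c / (c - c1) + 1) * (c - c1) <= t * (c - c1)) by (apply Rmult_le_compat_r; lra).
    nra. }
  generalize (Hmove (t - u) Hs j u Hu); replace (t - u + u) with t by ring.
  replace (IZR j - 0 - c * u) with 0 by (unfold u; field; lra).
  rewrite bump_0 by lra; lra.
Qed.

End Spreading.

Lemma sinc_gt c1 c2 al : 0 < c1 < c2 -> 0 < al <= 1 -> al <= 3 * (c2 - c1) / c2 ->
  c1 < c2 * sin al / al.
Proof.
  intros Hc Hal Hsmall.
  assert (Hsin := sin_ge_cubic al ltac:(lra)).
  assert (Hcube : c2 * (al * al * al) <= al * (3 * (c2 - c1))).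
  { apply Rmult_le_compat_l with (r := c2) in Hsmall; [| lra].
    replace (c2 * (3 * (c2 - c1) / c2)) with (3 * (c2 - c1)) in Hsmall by (field; lra).
    assert (al * al <= al) by nra; nra. }
  apply Rmult_lt_reg_r with al; [lra |].
  replace (c2 * sin al / al * al) with (c2 * sin al) by (field; lra).
  assert (c2 * (al - al * al * al / 6) <= c2 * sin al) by (apply Rmult_le_compat_l; lra).
  nra.
Qed.

Lemma exists_sinh_eq lam c : 0 < lam -> 0 < c ->
  exists gam, 0 < gam /\ lam * (exp gam - exp (- gam)) = c.
Proof.
  intros Hlam Hc; exists (arcsinh (c / (2 * lam))); split.
  - rewrite <- arcsinh_0; apply arcsinh_lt, Rdiv_lt_0_compat; lra.
  - generalize (sinh_arcsinh (c / (2 * lam))); unfold sinh; intros E.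
    replace (exp (arcsinh (c / (2 * lam))) - exp (- arcsinh (c / (2 * lam))))
      with (2 * (c / (2 * lam))) by lra.
    field; lra.
Qed.

Lemma exists_small_angle K m c1 c2 : 0 < K -> 0 < m -> 0 < c1 < c2 ->
  exists al, 0 < al <= 1 /\ K * (1 - cos al) <= m /\
    c1 < c2 * sin al / al <= c2.
Proof.
  intros HK Hm Hc.
  set (al := Rmin 1 (Rmin (2 * m / K) (3 * (c2 - c1) / c2))).
  assert (Hal : 0 < al <= 1).
  { split; [| apply Rmin_l]; apply Rmin_pos; [lra |]; apply Rmin_pos; apply Rdiv_lt_0_compat; lra. }
  assert (Hal_m : K * al <= 2 * m).
  { assert (al <= 2 * m / K) by (eapply Rle_trans; [apply Rmin_r | apply Rmin_l]).
    apply Rmult_le_compat_l with (r := K) in H; [| lra].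
    replace (K * (2 * m / K)) with (2 * m) in H by (field; lra); exact H. }
  assert (Hal_c : al <= 3 * (c2 - c1) / c2) by (eapply Rle_trans; [apply Rmin_r | apply Rmin_r]).
  exists al; split; [exact Hal |]; split; [| split; [apply sinc_gt; assumption |]].
  - assert (Hcos := cos_ge_1_minus_sq_half al ltac:(lra)).
    assert (1 - cos al <= al / 2) by nra.
    assert (K * (1 - cos al) <= K * (al / 2)) by (apply Rmult_le_compat_l; lra).
    lra.
  - apply Rmult_le_reg_r with al; [lra |].
    replace (c2 * sin al / al * al) with (c2 * sin al) by (field; lra).
    generalize (sin_le_id al ltac:(lra)); nra.
Qed.

(* Any speed [c1 < cstar] is beaten by an admissible bump for a growth rate
   [r] slightly below [s0 tau - eta]: take [gam] with [lam sinh gam] matching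
   a speed [c2] between [c1] and [cstar], then [al] small, so that the speed
   [c2 sin al / al] stays above [c1] while [cos al] costs less than the margin
   [(cstar - c2) gam] left by the minimality of [cstar]. *)
Lemma exists_admissible_bump_faster s0 tau eta lam cstar c1 :
  0 < eta -> 0 < lam -> 1 < repr0 s0 tau eta ->
  (forall gam, 0 < gam -> cstar <= cfun s0 tau eta lam gam) -> 0 < c1 < cstar ->
  exists r gam al c, 0 < r < s0 * tau - eta /\ c1 < c /\ admissible_bump lam r gam al c.
Proof.
  intros Heta Hlam HR Hmin Hc1.
  set (r0 := s0 * tau - eta).
  assert (Hr0 : 0 < r0).
  { unfold r0; unfold repr0 in HR; apply Rmult_lt_compat_r with (r := eta) in HR; [| lra].
    unfold Rdiv in HR; rewrite Rmult_assoc, Rinv_l in HR by lra; lra. }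
  set (c2 := (c1 + cstar) / 2).
  destruct (exists_sinh_eq lam c2 Hlam ltac:(unfold c2; lra)) as [gam [Hgam Hsh]].
  set (S := exp gam + exp (- gam)).
  assert (HS : 2 <= S) by (unfold S; generalize (exp_ineq1_le gam) (exp_ineq1_le (- gam)); lra).
  assert (Hcf : cstar * gam <= r0 + lam * (S - 2)).
  { assert (H := Hmin gam Hgam); unfold cfun, repr0 in H.
    apply Rmult_le_compat_r with (r := gam) in H; [| lra].
    replace ((eta * (s0 * tau / eta - 1) + lam * (exp (- gam) - 2 + exp gam)) / gam * gam)
      with (r0 + lam * (S - 2)) in H by (unfold r0, S; field; lra); exact H. }
  set (m := Rmin ((cstar - c2) * gam) r0 / 2).
  assert (Hm : 0 < m /\ m <= (cstar - c2) * gam / 2 /\ m <= r0 / 2).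
  { assert (0 < (cstar - c2) * gam) by (apply Rmult_lt_0_compat; unfold c2; lra).
    unfold m; generalize (Rmin_pos _ _ H Hr0) (Rmin_l ((cstar - c2) * gam) r0)
                         (Rmin_r ((cstar - c2) * gam) r0); lra. }
  destruct (exists_small_angle (lam * S) m c1 c2 ltac:(nra) ltac:(lra) ltac:(unfold c2; lra))
    as [al [Hal [Hcos [Hc1c Hcc2]]]].
  exists (r0 - m), gam, al, (c2 * sin al / al); split; [lra |]; split; [exact Hc1c |].
  repeat split; try lra.
  - rewrite <- Hsh; field; lra.
  - fold S; apply Rle_trans with (c2 * gam); [apply Rmult_le_compat_r; lra | nra].
Qed.

Lemma solution_ge_inside_front s0 tau eta lam I0 I r nu gam al c c1 :
  0 < s0 -> 0 < tau -> 0 < eta -> 0 < lam -> lattice_solution s0 tau eta lam I0 I ->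
  (forall j, 0 <= I0 j) -> (exists j, 0 < I0 j) ->
  0 < r -> 0 < nu -> (forall v, 0 <= v <= nu -> r * v <= freac s0 tau eta v) ->
  admissible_bump lam r gam al c -> 0 < c1 < c ->
  exists del T, 0 < del /\
    forall t, T <= t -> forall j, IZR (Z.abs j) <= c1 * t -> del <= I j t.
Proof.
  intros Hs0 Htau Heta Hlam HI HI0 [jp Hjp] Hr Hnu Hgrowth Hadm Hc1.
  assert (Hjp' : 0 < I0 (- - jp)%Z) by (rewrite Z.opp_involutive; exact Hjp).
  destruct (solution_ge_behind_front s0 tau eta lam I0 I Hs0 Htau Heta Hlam HI HI0 r nu Hgrowth
              gam al c c1 (ex_intro _ jp Hjp) Hr Hnu Hadm Hc1) as [del1 [T1 [Hdel1 H1]]].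
  destruct (solution_ge_behind_front s0 tau eta lam (fun j => I0 (- j)%Z) (fun j t => I (- j)%Z t)
              Hs0 Htau Heta Hlam (lattice_solution_reflect _ _ _ _ _ _ HI) (fun j => HI0 (- j)%Z)
              r nu Hgrowth gam al c c1 (ex_intro _ (- jp)%Z Hjp')
              Hr Hnu Hadm Hc1) as [del2 [T2 [Hdel2 H2]]].
  exists (Rmin del1 del2), (Rmax T1 T2); split; [apply Rmin_pos; assumption |].
  intros t Ht j Hj; destruct (Z_le_gt_dec 0 j).
  - eapply Rle_trans; [apply Rmin_l |]; apply H1; [generalize (Rmax_l T1 T2); lra |].
    rewrite Z.abs_eq in Hj by lia; split; [apply IZR_le; lia | exact Hj].
  - eapply Rle_trans; [apply Rmin_r |].
    rewrite <- (Z.opp_involutive j); apply H2; [generalize (Rmax_r T1 T2); lra |].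
    rewrite Z.abs_neq in Hj by lia; split; [apply IZR_le; lia | exact Hj].
Qed.

Lemma stationary_ge_eventual_bound (V : Z -> R) (I : Z -> R -> R) del T c :
  0 < c -> (forall j t, 0 <= t -> I j t <= V j) ->
  (forall t, T <= t -> forall j, IZR (Z.abs j) <= c * t -> del <= I j t) ->
  forall j, del <= V j.
Proof.
  intros Hc HIV Hlow j.
  set (t := Rmax (Rmax T 0) (IZR (Z.abs j) / c)).
  assert (HT : Rmax T 0 <= t) by apply Rmax_l.
  assert (Hj : IZR (Z.abs j) <= c * t).
  { assert (IZR (Z.abs j) / c <= t) by apply Rmax_r.
    apply Rmult_le_compat_l with (r := c) in H; [| lra].
    replace (c * (IZR (Z.abs j) / c)) with (IZR (Z.abs j)) in H by (field; lra); exact H. }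
  generalize (Hlow t ltac:(generalize (Rmax_l T 0); lra) j Hj)
             (HIV j t ltac:(generalize (Rmax_r T 0); lra)); lra.
Qed.

Theorem solution_converges_inside s0 tau eta lam I0 I cstar V :
  0 < s0 -> 0 < tau -> 0 < eta -> 0 < lam -> 1 < repr0 s0 tau eta ->
  lattice_solution s0 tau eta lam I0 I -> (forall j, 0 <= I0 j) -> (exists j, 0 < I0 j) ->
  (forall gam, 0 < gam -> cstar <= cfun s0 tau eta lam gam) ->
  (forall j, 0 < V j) -> (exists M, forall j, Rabs (V j) <= M) ->
  (forall j, lattice_field s0 tau eta lam I0 V j = 0) ->
  forall c, 0 < c < cstar -> forall eps, 0 < eps -> exists T, forall t, T <= t ->
    forall j, IZR (Z.abs j) <= c * t -> Rabs (I j t - V j) <= eps.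
Proof.
  intros Hs0 Htau Heta Hlam HR HI HI0 Hsource Hmin HV [MV HMV] HVeq c Hc eps Heps.
  set (c1 := (c + cstar) / 2).
  destruct (exists_admissible_bump_faster s0 tau eta lam cstar c1 Heta Hlam HR Hmin
              ltac:(unfold c1; lra)) as [r [gam [al [ct [Hr [Hct Hadm]]]]]].
  destruct (freac_ge_linear_near_0 s0 tau eta Hs0 Htau r ltac:(lra)) as [nu [Hnu Hgrowth]].
  destruct (solution_ge_inside_front s0 tau eta lam I0 I r nu gam al ct c1 Hs0 Htau Heta Hlam HI
              HI0 Hsource ltac:(lra) Hnu Hgrowth Hadm ltac:(split; [unfold c1; lra | exact Hct]))
    as [del [T1 [Hdel Hinside]]].
  assert (HIV := solution_le_stationary s0 tau eta lam I0 I Hs0 Htau Heta Hlam HI V HV HVeq).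
  assert (HVrange : forall j, del <= V j <= MV).
  { intros j; split; [apply (stationary_ge_eventual_bound V I del T1 c1); [unfold c1; lra | ..];
                      assumption |].
    generalize (HMV j); intros HMVj; apply Rabs_le_between in HMVj; lra. }
  destruct (solution_near_stationary s0 tau eta lam I0 I V del MV Hs0 Htau Heta Hlam HI HI0 HVeq
              Hdel HVrange eps Heps) as [tau0 [R [Htau0 Hlocal]]].
  exists (Rmax (Rmax T1 0 + tau0 + 1) ((R + c1 * tau0) / (c1 - c))).
  intros t Ht j Hj.
  assert (Ht1 : Rmax T1 0 + tau0 + 1 <= t) by (eapply Rle_trans; [apply Rmax_l | exact Ht]).
  assert (Hfar : R + c1 * tau0 <= t * (c1 - c)).
  { assert (Ht2 : (R + c1 * tau0) / (c1 - c) <= t) by (eapply Rle_trans; [apply Rmax_r | exact Ht]).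
    apply Rmult_le_compat_r with (r := c1 - c) in Ht2; [| unfold c1; lra].
    replace ((R + c1 * tau0) / (c1 - c) * (c1 - c)) with (R + c1 * tau0) in Ht2
      by (field; unfold c1; lra); exact Ht2. }
  generalize (Rmax_l T1 0) (Rmax_r T1 0); intros.
  assert (Hlow : V j - eps <= I j (t - tau0 + tau0)).
  { apply Hlocal; [lra |]; intros k Hk; apply Hinside; [lra |].
    assert (IZR (Z.abs k) <= IZR (Z.abs j) + IZR (Z.abs (k - j)))
      by (rewrite <- plus_IZR; apply IZR_le; lia).
    nra. }
  replace (t - tau0 + tau0) with t in Hlow by ring.
  generalize (HIV j t ltac:(lra)); intros; apply Rabs_le_between; lra.
Qed.

Theorem theorem3
  (s0 tau eta lam : R) (I0 : Z -> R) (cstar : R)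
  (Iinf : Z -> R) (I : Z -> R -> R)
  (* parameters *)
  (Hs0 : 0 < s0 < 1) (Htau : 0 < tau) (Heta : 0 < eta) (Hlam : 0 < lam)
  (* initial source data *)
  (HI0supp : exists N : Z, forall j : Z, (N < Z.abs j)%Z -> I0 j = 0)
  (HI0range : forall j : Z, 0 <= I0 j < 1)
  (HI0pos : exists j : Z, 0 < I0 j)
  (HR0 : 1 < repr0 s0 tau eta)
  (* c_* is the minimum over gamma > 0 *)
  (Hcstar : is_min_pos (cfun s0 tau eta lam) cstar)
  (* Iinf : the positive bounded stationary solution *)
  (HIinf_pos : forall j : Z, 0 < Iinf j)
  (HIinf_bdd : exists M : R, forall j : Z, Rabs (Iinf j) <= M)
  (HIinf_eq : forall j : Z,
      0 = freac s0 tau eta (Iinf j) + I0 j + lam * dlap Iinf j)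
  (* I : the (locally-in-time bounded) solution of the lattice Cauchy problem *)
  (HI_ode : forall (j : Z) (t : R), 0 < t ->
      is_derive (I j) t
        (freac s0 tau eta (I j t) + I0 j + lam * dlap (fun k => I k t) j))
  (HI_init : forall j : Z, I j 0 = 0)
  (HI_cont0 : forall j : Z, filterlim (I j) (at_right 0) (locally 0))
  (HI_bdd : forall T : R, exists M : R,
      forall (j : Z) (t : R), 0 <= t <= T -> Rabs (I j t) <= M) :
  0 < cstar /\
  (forall c : R, 0 < c < cstar ->
     forall eps : R, 0 < eps -> exists T : R, forall t : R, T <= t ->
       forall j : Z, IZR (Z.abs j) <= c * t -> Rabs (I j t - Iinf j) <= eps) /\
  (forall c : R, cstar < c ->
     forall eps : R, 0 < eps -> exists T : R, forall t : R, T <= t ->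
       forall j : Z, c * t <= IZR (Z.abs j) -> Rabs (I j t) <= eps).
Proof.
  destruct Hcstar as [Hattained Hmin]; destruct HI0supp as [N HN].
  assert (Hs : 0 < s0) by lra.
  assert (HI : lattice_solution s0 tau eta lam I0 I) by (split; assumption).
  assert (HI0 : forall j, 0 <= I0 j) by (intros j; apply HI0range).
  split; [| split].
  - destruct Hattained as [gam [Hgam <-]]; apply cfun_pos; assumption.
  - apply (solution_converges_inside s0 tau eta lam I0 I cstar Iinf Hs Htau Heta Hlam HR0 HI HI0
             HI0pos Hmin HIinf_pos HIinf_bdd).
    intros j; symmetry; apply HIinf_eq.
  - exact (solution_vanishes_ahead s0 tau eta lam I0 I N cstar Hs Htau Heta Hlam HR0 HI HN HI0range
             Hattained).
Qed.
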